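(* Let $z_1,\dots,z_n$ be a stream of elements sampled into a buffer $B$ of size $s$ using the RS-x algorithm (described below). Then at any time $t\ge s+2$, the $s$ elements of the buffer are independent, and each is a uniformly random sample (with replacement) from $\{z_1,\dots,z_{t-1}\}$; i.e. the buffer consists of $s$ i.i.d. samples from $\{z_1,\dots,z_{t-1}\}$.
   Context: RS-x update when the point $z_t$ arrives at step $t$: if $|B|<s$, add $z_t$ to $B$; else if $t=s+1$, replace $B$ by $s$ points sampled uniformly with replacement from $B\cup\{z_t\}$; else (for $t>s+1$) independently replace each of the $s$ buffer entries by $z_t$ with probability $1/t$. The buffer at time $t$ means the buffer after the updates with $z_1,\dots,z_{t-1}$ (before $z_t$ is processed); probabilities are over the randomness of the update rule, for a fixed stream. *)

(* Finite discrete distributions are represented as lists of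
   weighted outcomes (weight, buffer); probabilities are over the randomness of
   the RS-x update rule for a fixed stream z (z t is the t-th element, t >= 1). *)
From HB Require Import structures.
From mathcomp Require Import all_boot all_order all_algebra.
Set Implicit Arguments. Unset Strict Implicit. Unset Printing Implicit Defensive.
Import Order.TTheory GRing.Theory Num.Theory.
Local Open Scope ring_scope.

Section RSx.
Variables (R : realFieldType) (T : eqType).

Definition dist := seq (R * seq T).

Definition dbind (d : dist) (f : seq T -> dist) : dist :=
  flatten [seq [seq (pb.1 * qc.1, qc.2) | qc <- f pb.2] | pb <- d].

Definition Pr (d : dist) (v : seq T) : R :=
  \sum_(pb <- d | pb.2 == v) pb.1.

Definition rsx_step (s t : nat) (zt : T) (B : seq T) : dist :=
  if (size B < s)%N then [:: (1, rcons B zt)]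
  else if (t == s.+1)%N then
    (* s points sampled uniformly with replacement from B ∪ {zt} (s+1 points) *)
    [seq ((t%:R)^-1 ^+ s, [seq nth zt (rcons B zt) (f i) | i <- enum 'I_s])
    | f : {ffun 'I_s -> 'I_s.+1} <- enum {ffun 'I_s -> 'I_s.+1}]
  else
    (* each entry independently replaced by zt with probability 1/t *)
    [seq (\prod_(i < s) (if m i then (t%:R)^-1 else 1 - (t%:R)^-1),
          [seq (if m i then zt else nth zt B i) | i <- enum 'I_s])
    | m : {ffun 'I_s -> bool} <- enum {ffun 'I_s -> bool}].

Fixpoint rsx_after (s : nat) (z : nat -> T) (m : nat) : dist :=
  match m with
  | 0 => [:: (1, [::])]
  | m'.+1 => dbind (rsx_after s z m') (rsx_step s m'.+1 (z m'.+1))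
  end.

(* the buffer at time t: after the updates with z_1, ..., z_{t-1} *)
Definition rsx_buffer (s : nat) (z : nat -> T) (t : nat) : dist :=
  rsx_after s z t.-1.

End RSx.

(* Test the buffer distribution against product functions
   B |-> \prod_i h_i (B_i).  At step s+1 every slot is an independent uniform
   draw from z_1, ..., z_(s+1), so the expectation is the product of the
   uniform means of the h_i.  At a later step t each slot independently
   becomes z_t with probability 1/t, which turns the uniform mean over
   z_1, ..., z_(t-1) into the uniform mean over z_1, ..., z_t; hence the
   factorisation persists.  Taking h_i to be the indicator of v_i yields the
   point probabilities. *)
From mathcomp Require Import all_boot all_order all_algebra.
From mathcomp Require Import ring zify.
Import Order.TTheory GRing.Theory Num.Theory.
Local Open Scope ring_scope.

Lemma iota_rcons a m : iota a m.+1 = rcons (iota a m) (a + m)%N.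
Proof. by rewrite -addn1 iotaD cats1. Qed.

Section RSx.
Context {R : realFieldType} {T : eqType}.

Definition dexpect (d : dist R T) (g : seq T -> R) : R :=
  \sum_(pb <- d) pb.1 * g pb.2.

Lemma dexpect_dbind (d : dist R T) (f : seq T -> dist R T) g :
  dexpect (dbind d f) g = dexpect d (fun B => dexpect (f B) g).
Proof.
rewrite /dexpect /dbind big_flatten /= big_map; apply: eq_bigr => pb _.
by rewrite big_map mulr_sumr; apply: eq_bigr => qc _; rewrite mulrA.
Qed.

Lemma eq_in_dexpect (d : dist R T) g g' :
  (forall pb, pb \in d -> g pb.2 = g' pb.2) -> dexpect d g = dexpect d g'.
Proof.
by move=> eq_g; rewrite /dexpect !big_seq; apply: eq_bigr => pb /eq_g ->.
Qed.

Lemma Pr_dexpect (d : dist R T) v : Pr d v = dexpect d (fun B => (B == v)%:R).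
Proof.
rewrite /Pr /dexpect big_mkcond; apply: eq_bigr => pb _.
by case: eqP; rewrite ?mulr1 ?mulr0.
Qed.

Lemma eqseq_indicator x0 (B v : seq T) : size B = size v ->
  (B == v)%:R = \prod_(i < size v) (nth x0 B i == nth x0 v i)%:R :> R.
Proof.
elim: v B => [|x v IH] [|b B] //=; first by rewrite big_ord0.
by move=> [eq_size]; rewrite big_ord_recl eqseq_cons -mulnb natrM (IH B).
Qed.

Lemma support_dbind (P : seq T -> Prop) (d : dist R T) (f : seq T -> dist R T) :
  (forall pb qc, pb \in d -> qc \in f pb.2 -> P qc.2) ->
  forall qc, qc \in dbind d f -> P qc.2.
Proof.
move=> Pf qc /flattenP [_ /mapP [pb pb_d ->] /mapP [qc' qc'_f ->]].
exact: Pf pb_d qc'_f.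
Qed.

Section Buffer.
Variables (s : nat) (z : nat -> T).

Definition stream_mean (m : nat) (h : T -> R) : R :=
  (m%:R)^-1 * \sum_(j <- iota 1 m) h (z j).

Lemma nth_map_ord_enum (x0 : T) (F : 'I_s -> T) (i : 'I_s) :
  nth x0 [seq F j | j <- enum 'I_s] i = F i.
Proof. by rewrite (nth_map i) ?size_enum_ord // nth_ord_enum. Qed.

Lemma size_rsx_step t zt (B : seq T) qc : (size B == s) || ((size B).+1 == s) ->
  qc \in rsx_step R s t zt B -> size qc.2 = s.
Proof.
rewrite /rsx_step; case: ltnP => [lt_Bs | _] size_B.
  rewrite inE => /eqP -> /=; rewrite size_rcons; apply/eqP.
  by rewrite ltn_eqF in size_B.
by case: ifP => _ /mapP [f _ ->]; rewrite /= size_map size_enum_ord.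
Qed.

Lemma rsx_after_fill m : (m <= s)%N ->
  rsx_after R s z m = [:: (1, [seq z j | j <- iota 1 m])].
Proof.
elim: m => [//|m IH] lt_ms.
rewrite iota_rcons map_rcons add1n /= IH ?(ltnW lt_ms) //.
by rewrite /dbind /rsx_step /= size_map size_iota lt_ms /= mulr1.
Qed.

Lemma size_rsx_after m qc :
  (s <= m)%N -> qc \in rsx_after R s z m -> size qc.2 = s.
Proof.
elim: m qc => [|m IH] qc le_sm.
  by case: s le_sm => // _; rewrite inE => /eqP ->.
move: qc; rewrite /=; apply: (support_dbind (fun B => size B = s)).
move=> pb qc pb_d; apply: size_rsx_step.
case: (leqP s m) => [le_sm' | lt_ms]; first by rewrite (IH pb) ?eqxx.
have eq_s : s = m.+1 by apply/eqP; rewrite eqn_leq le_sm.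
move: pb_d; rewrite rsx_after_fill ?eq_s // inE => /eqP -> /=.
by rewrite size_map size_iota eqxx orbT.
Qed.

Lemma dexpect_rsx_step_prod t zt (B : seq T) (h : 'I_s -> T -> R) x0 :
  size B = s -> t != s.+1 ->
  dexpect (rsx_step R s t zt B) (fun B' => \prod_(i < s) h i (nth x0 B' i)) =
  \prod_(i < s) ((t%:R)^-1 * h i zt + (1 - (t%:R)^-1) * h i (nth x0 B i)).
Proof.
move=> size_B t_neq; rewrite /rsx_step size_B ltnn (negbTE t_neq).
rewrite /dexpect big_map big_enum /=.
under [RHS]eq_bigr => i _ do rewrite -(big_bool _ (fun b =>
  if b then (t%:R)^-1 * h i zt else (1 - (t%:R)^-1) * h i (nth x0 B i))).
rewrite bigA_distr_bigA /=; apply: eq_bigr => m _; rewrite -big_split /=.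
apply: eq_bigr => i _; rewrite nth_map_ord_enum; case: (m i) => //=.
by rewrite (set_nth_default x0) // size_B.
Qed.

Lemma dexpect_rsx_step_resample (h : 'I_s -> T -> R) x0 :
  dexpect (rsx_step R s s.+1 (z s.+1) [seq z j | j <- iota 1 s])
    (fun B' => \prod_(i < s) h i (nth x0 B' i)) =
  \prod_(i < s) stream_mean s.+1 (h i).
Proof.
pose L := rcons [seq z j | j <- iota 1 s] (z s.+1).
have sum_L i : \sum_(j <- iota 1 s.+1) h i (z j) =
               \sum_(k < s.+1) h i (nth (z s.+1) L k).
  rewrite -(big_map z xpredT) iota_rcons map_rcons add1n (big_nth (z s.+1)).
  by rewrite size_rcons size_map size_iota big_mkord.
rewrite /stream_mean; under eq_bigr => i _ do rewrite sum_L.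
rewrite prodrMl card_ord bigA_distr_bigA mulr_sumr.
rewrite /rsx_step size_map size_iota ltnn eqxx /dexpect big_map big_enum /=.
apply: eq_bigr => f _; congr (_ * _).
by apply: eq_bigr => i _; rewrite nth_map_ord_enum.
Qed.

Lemma stream_mean_step m (h : T -> R) : (0 < m)%N ->
  let p := (m.+1%:R)^-1 in
  stream_mean m (fun x => p * h (z m.+1) + (1 - p) * h x) = stream_mean m.+1 h.
Proof.
move=> m_gt0 p; rewrite /stream_mean /p.
have m_neq0 : m%:R != 0 :> R by rewrite pnatr_eq0 -lt0n.
have m1_neq0 : m%:R + 1 != 0 :> R by rewrite natr1 pnatr_eq0.
rewrite [iota 1 m.+1]iota_rcons -cats1 big_cat big_seq1 add1n big_split /=.
rewrite big_const_seq count_predT size_iota iter_addr_0 -mulr_sumr -natr1.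
by rewrite -mulr_natr; field; rewrite m_neq0 m1_neq0.
Qed.

Lemma dexpect_rsx_after_prod (h : 'I_s -> T -> R) x0 m : (s < m)%N ->
  dexpect (rsx_after R s z m) (fun B => \prod_(i < s) h i (nth x0 B i)) =
  \prod_(i < s) stream_mean m (h i).
Proof.
elim: m h => // m IH h; rewrite ltnS leq_eqVlt => /orP [/eqP <- | lt_sm].
  rewrite /= dexpect_dbind rsx_after_fill // {1}/dexpect big_seq1 mul1r.
  exact: dexpect_rsx_step_resample.
rewrite /= dexpect_dbind.
set p := (m.+1%:R)^-1 : R.
rewrite (eq_in_dexpect _ _ (fun B => \prod_(i < s)
           (p * h i (z m.+1) + (1 - p) * h i (nth x0 B i)))); last first.
  move=> pb pb_d; apply: dexpect_rsx_step_prod.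
    exact: size_rsx_after (ltnW lt_sm) pb_d.
  by rewrite eqSS neq_ltn lt_sm orbT.
rewrite (IH (fun i x => p * h i (z m.+1) + (1 - p) * h i x)) //.
by apply: eq_bigr => i _; apply: stream_mean_step; apply: leq_ltn_trans lt_sm.
Qed.

End Buffer.

End RSx.

Theorem theorem19 (R : realFieldType) (T : eqType) (n s t : nat)
    (z : nat -> T) :
  (s.+2 <= t)%N -> (t <= n.+1)%N ->
  forall v : seq T, size v = s ->
    Pr (rsx_buffer R s z t) v =
    \prod_(x <- v) ((count (fun i => z i == x) (iota 1 t.-1))%:R / (t.-1)%:R).
Proof.
move=> le_s2t _ v size_v; set x0 := z 0%N.
have lt_st : (s < t.-1)%N by lia.
rewrite /rsx_buffer Pr_dexpect.
rewrite (eq_in_dexpect _ _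
           (fun B => \prod_(i < s) (nth x0 B i == nth x0 v i)%:R)).
  rewrite (dexpect_rsx_after_prod _ _ (fun i x => (x == nth x0 v i)%:R)) //.
  rewrite (big_nth x0) size_v big_mkord.
  apply: eq_bigr => i _; rewrite /stream_mean mulrC.
  rewrite -sum1_count natr_sum [in RHS]big_mkcond.
  by congr (_ * _); apply: eq_bigr => j _; case: eqP.
move=> pb pb_d; rewrite (eqseq_indicator x0) size_v //.
exact: size_rsx_after (ltnW lt_st) pb_d.
Qed.
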